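(* Let $\mathbf{X}$ be a finitely supported real random variable with $\mathbf{E}[\mathbf{X}]=0$ and $\mathrm{Var}[\mathbf{X}]=1$. Let $q_1(x_1,\dots,x_{ds})$ be a multilinear polynomial of degree at most $d$ with $\|q_1\|_{\mathrm{coeff}}=1$, and let $q_2(x_1,\dots,x_N)$ (with $N\ge ds$) be a multilinear polynomial of degree at most $d$ such that $\|q_1-q_2\|_{\mathrm{coeff}}\le\eta\le1$ (viewing both as polynomials in $x_1,\dots,x_N$). Then for any positive integer $k$ there exists a value $\xi_{k,d,\mathbf{X}}$, depending only on $k$, $d$ and $\mathbf{X}$, such that \[ \mathrm{Mom}_k\big(q_1(\mathbf{X}^{\otimes ds}),q_2(\mathbf{X}^{\otimes N})\big)\le\xi_{k,d,\mathbf{X}}\cdot\eta . \]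
   Context: A multilinear polynomial of degree at most $d$ is $p(x)=\sum_{|S|\le d}\widehat{p}(S)\prod_{i\in S}x_i$ and $\|p\|_{\mathrm{coeff}}=(\sum_S\widehat{p}(S)^2)^{1/2}$. For real random variables $\mathbf{Y},\mathbf{Z}$ with finite moments, $\mathrm{Mom}_k(\mathbf{Y},\mathbf{Z})=\big(\sum_{i=1}^k(\mathbf{E}[\mathbf{Y}^i]-\mathbf{E}[\mathbf{Z}^i])^2\big)^{1/2}$. $\mathbf{X}^{\otimes m}$ is a vector of $m$ i.i.d. copies of $\mathbf{X}$. *)

From HB Require Import structures.
From mathcomp Require Import all_boot all_order all_algebra.
From mathcomp Require Import reals.
Set Implicit Arguments. Unset Strict Implicit. Unset Printing Implicit Defensive.
Import Order.TTheory GRing.Theory Num.Theory.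
Local Open Scope ring_scope.

(* A multilinear polynomial in N variables x_0..x_(N-1): its coefficient
   function S |-> \hat p(S), S ranging over subsets of 'I_N. *)
Definition mlpoly (R : realType) (N : nat) := {set 'I_N} -> R.

Definition mleval (R : realType) (N : nat) (p : mlpoly R N) (x : 'I_N -> R) : R :=
  \sum_(S : {set 'I_N}) p S * \prod_(i in S) x i.

Definition mldeg_le (R : realType) (N : nat) (p : mlpoly R N) (d : nat) : Prop :=
  forall S : {set 'I_N}, (d < #|S|)%N -> p S = 0.

Definition coeff_norm (R : realType) (N : nat) (p : mlpoly R N) : R :=
  Num.sqrt (\sum_(S : {set 'I_N}) p S ^+ 2).

(* view a polynomial in x_0..x_(m-1) as a polynomial in x_0..x_(N-1)
   (meaningful when m <= N): same coefficients on subsets of the first m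
   variables, 0 elsewhere. *)
Definition mlextend (R : realType) (m N : nat) (q : mlpoly R m) : mlpoly R N :=
  fun S => if [forall i in S, (nat_of_ord i < m)%N]
           then q [set j : 'I_m | [exists i in S, nat_of_ord i == nat_of_ord j]]
           else 0.

Definition mlsub (R : realType) (N : nat) (p q : mlpoly R N) : mlpoly R N :=
  fun S => p S - q S.

(* A finitely supported real random variable X is given by its distribution:
   values a i taken with probability w i, i : 'I_n. *)
Definition is_fdist (R : realType) (n : nat) (w : 'I_n -> R) : Prop :=
  (forall i, 0 <= w i) /\ \sum_(i < n) w i = 1.

Definition fexp (R : realType) (n : nat) (a w : 'I_n -> R) : R :=
  \sum_(i < n) w i * a i.

Definition fvar (R : realType) (n : nat) (a w : 'I_n -> R) : R :=
  \sum_(i < n) w i * (a i - fexp a w) ^+ 2.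

(* E[ p(X^{\otimes m})^j ], X^{\otimes m} = m i.i.d. copies of X:
   sum over all outcomes f : 'I_m -> 'I_n of the product probability. *)
Definition tens_moment (R : realType) (n : nat) (a w : 'I_n -> R)
    (m : nat) (p : mlpoly R m) (j : nat) : R :=
  \sum_(f : {ffun 'I_m -> 'I_n})
     (\prod_(l < m) w (f l)) * (mleval p (fun l => a (f l))) ^+ j.

Definition Mom (R : realType) (n : nat) (a w : 'I_n -> R) (k : nat)
    (m : nat) (p : mlpoly R m) (M : nat) (q : mlpoly R M) : R :=
  Num.sqrt (\sum_(1 <= j < k.+1)
     (tens_moment a w p j - tens_moment a w q j) ^+ 2).

(* Write P for q1 seen as a polynomial in N variables, Q for q2 and
   D = P - Q.  Then E[P^j] - E[Q^j] = E[D T] with T = sum_i P^(j-1-i) Q^i, and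
   AM-GM gives 2 eta |D T| <= D^2 + eta^2 T^2, so everything reduces to bounds on
   even moments of low-degree polynomials that do not depend on the number of
   variables.  These come from a Bonami-type hypercontractive inequality
     E[p(X^N)^(2m)] <= (sum_S L^|S| p(S)^2)^m,
   proved one variable at a time: if p = r + x_v q with q, r free of x_v, then by
   independence E[(r + X q)^(2m)] = sum_i C(2m,i) E[X^i] E[r^(2m-i) q^i]; the term
   i = 1 vanishes because E[X] = 0, and the others are controlled by E[r^(2m)],
   E[q^(2m)] and the Hoelder-type bound E[q^2 r^(2m-2)] <= 2 alpha beta^(m-1).
   For degree <= d the weights L^|S| are at most L^d. *)

From mathcomp Require Import all_boot all_order all_algebra.
From mathcomp Require Import reals ring lra zify.
Set Implicit Arguments. Unset Strict Implicit. Unset Printing Implicit Defensive.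
Import Order.TTheory GRing.Theory Num.Theory.
Local Open Scope ring_scope.

Section PowerInequalities.
Variable R : realFieldType.
Implicit Types (x y u v : R).

Lemma normrX_even x k : `|x| ^+ (2 * k) = x ^+ (2 * k).
Proof. by rewrite !exprM real_normK ?num_real. Qed.

Lemma expr_even_ge0 x k : 0 <= x ^+ (2 * k).
Proof. by rewrite exprn_even_ge0 // oddM. Qed.

Lemma mulXX_le_addXX i j u v : 0 <= u -> 0 <= v ->
  u ^+ i * v ^+ j <= u ^+ (i + j) + v ^+ (i + j).
Proof.
move=> u0 v0; wlog uv : u v i j u0 v0 / u <= v => [hw|].
  case: (leP u v) => [|/ltW vu]; first exact: hw.
  by rewrite mulrC addrC addnC; apply: hw.
apply: le_trans (_ : v ^+ (i + j) <= _); last by rewrite lerDr exprn_ge0.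
by rewrite exprD ler_wpM2r ?exprn_ge0 // lerXn2r.
Qed.

Lemma normrX_mul_le m i x y : (2 <= i <= 2 * m)%N ->
  `|x| ^+ i * `|y| ^+ (2 * m - i) <= x ^+ (2 * m) + x ^+ 2 * y ^+ (2 * (m - 1)).
Proof.
case/andP=> i2 im; have [j ei] : exists j, i = (2 + j)%N by exists (i - 2)%N; lia.
have -> : (2 * m - i = 2 * (m - 1) - j)%N by lia.
have -> : (2 * m = 2 + 2 * (m - 1))%N by lia.
have jm : (j <= 2 * (m - 1))%N by lia.
rewrite {i i2 im}ei.
rewrite [x ^+ (2 + _)]exprD [`|x| ^+ (2 + _)]exprD -mulrA real_normK ?num_real //.
rewrite -mulrDr ler_wpM2l ?sqr_ge0 //.
rewrite -(normrX_even x) -(normrX_even y).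
by have := mulXX_le_addXX j (2 * (m - 1) - j) (normr_ge0 x) (normr_ge0 y); rewrite subnKC.
Qed.

Lemma sqr_sumXX_le x y j :
  (\sum_(i < j) x ^+ (j.-1 - i) * y ^+ i) ^+ 2 <=
  (2 * j ^ 2)%:R * (x ^+ (2 * j.-1) + y ^+ (2 * j.-1)).
Proof.
have sum_le : `|\sum_(i < j) x ^+ (j.-1 - i) * y ^+ i| <= j%:R * (`|x| ^+ j.-1 + `|y| ^+ j.-1).
  apply: le_trans (ler_norm_sum _ _ _) _.
  rewrite mulr_natl -[X in _ *+ X]card_ord -sumr_const.
  apply: ler_sum => i _; rewrite normrM !normrX.
  have := mulXX_le_addXX (j.-1 - i) i (normr_ge0 x) (normr_ge0 y).
  by rewrite subnK // -ltnS prednK ?ltn_ord // (leq_ltn_trans _ (ltn_ord i)).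
rewrite -real_normK ?num_real //.
apply: le_trans (_ : (j%:R * (`|x| ^+ j.-1 + `|y| ^+ j.-1)) ^+ 2 <= _).
  by rewrite lerXn2r ?nnegrE // mulr_ge0 ?addr_ge0 ?exprn_ge0.
have eX (z : R) : z ^+ (2 * j.-1) = (`|z| ^+ j.-1) ^+ 2.
  by rewrite -exprM [(j.-1 * 2)%N]mulnC normrX_even.
rewrite !eX natrM natrX; set A := `|x| ^+ j.-1; set B := `|y| ^+ j.-1.
rewrite -subr_ge0 (_ : _ - _ = j%:R ^+ 2 * (A - B) ^+ 2); last by ring.
by rewrite mulr_ge0 ?sqr_ge0.
Qed.

Lemma amgm_mul_le e x y : 2 * e * `|x * y| <= x ^+ 2 + e ^+ 2 * y ^+ 2.
Proof.
rewrite normrM -(real_normK (num_real x)) -(real_normK (num_real y)) -subr_ge0.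
by rewrite (_ : _ - _ = (`|x| - e * `|y|) ^+ 2) ?sqr_ge0 //; ring.
Qed.

Lemma exprD_ge_split (L al be : R) m : 1 <= L -> 0 <= al -> 0 <= be -> (0 < m)%N ->
  be ^+ m + L * al * (al + be) ^+ (m - 1) <= (L * al + be) ^+ m.
Proof.
case: m => // k L1 al0 be0 _; rewrite subn1 /=.
have Lal0 : 0 <= L * al by rewrite mulr_ge0 // (le_trans _ L1).
rewrite !exprS /= mulrDl addrC; apply: lerD; apply: ler_wpM2l => //; apply: lerXn2r;
  rewrite ?nnegrE ?addr_ge0 ?lerD2r ?lerDr ?ler_peMl //.
Qed.

End PowerInequalities.

Lemma sqrt_sum_sqr_le (R : rcfType) (x c : nat -> R) e m n : 0 <= e ->
  (forall j, `|x j| <= c j * e) ->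
  Num.sqrt (\sum_(m <= j < n) x j ^+ 2) <= Num.sqrt (\sum_(m <= j < n) c j ^+ 2) * e.
Proof.
move=> e0 xc; rewrite -(ger0_norm e0) -sqrtr_sqr -sqrtrM ?sumr_ge0 // => [|j _];
  last exact: sqr_ge0.
rewrite ler_sqrt ?mulr_ge0 ?sumr_ge0 // => [|j _]; last exact: sqr_ge0.
rewrite mulr_suml; apply: ler_sum => j _; rewrite -exprMn -real_normK ?num_real //.
by rewrite lerXn2r ?nnegrE ?(le_trans _ (xc j)).
Qed.

Section FfunUpdate.
Variables (aT : finType) (rT : Type).
Implicit Types (g : {ffun aT -> rT}) (x l : aT) (y : rT).

Definition fupd g x y : {ffun aT -> rT} := [ffun l => if l == x then y else g l].

Lemma fupd_eq g x y : fupd g x y x = y.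
Proof. by rewrite ffunE eqxx. Qed.

Lemma fupd_neq g x y l : l != x -> fupd g x y l = g l.
Proof. by rewrite ffunE => /negbTE->. Qed.

Lemma fupdK g x y : fupd (fupd g x y) x (g x) = g.
Proof. by apply/ffunP => l; rewrite !ffunE; case: eqP => [->|]. Qed.

End FfunUpdate.

Lemma widen_ord_inj M N (h : (M <= N)%N) : injective (widen_ord h).
Proof. by move=> i j /(congr1 val) /= /val_inj. Qed.

Lemma widen_ord_lift N (i : 'I_N) : widen_ord (leqnSn N) i = lift ord_max i.
Proof. by apply: val_inj; rewrite /= /bump leqNgt ltn_ord. Qed.

Definition restrf (T : Type) M N (h : (M <= N)%N) (g : {ffun 'I_N -> T}) : {ffun 'I_M -> T} :=
  [ffun i => g (widen_ord h i)].

Lemma restrf_id (T : Type) N (h : (N <= N)%N) (g : {ffun 'I_N -> T}) : restrf h g = g.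
Proof. by apply/ffunP => i; rewrite ffunE; congr (g _); apply: val_inj. Qed.

Lemma restrf_comp (T : Type) M N P (hMN : (M <= N)%N) (hNP : (N <= P)%N) (hMP : (M <= P)%N)
  (g : {ffun 'I_P -> T}) : restrf hMN (restrf hNP g) = restrf hMP g.
Proof. by apply/ffunP => i; rewrite !ffunE; congr (g _); apply: val_inj. Qed.

Section ProductExpectation.
Variables (R : realFieldType) (n : nat) (w : 'I_n -> R).
Hypothesis w_ge0 : forall i, 0 <= w i.
Hypothesis w_sum1 : \sum_(i < n) w i = 1.

Definition expect N (F : {ffun 'I_N -> 'I_n} -> R) : R :=
  \sum_(g : {ffun 'I_N -> 'I_n}) (\prod_(l < N) w (g l)) * F g.

Section FixedDimension.
Variable N : nat.
Implicit Types (F G : {ffun 'I_N -> 'I_n} -> R) (g : {ffun 'I_N -> 'I_n}).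

Lemma eq_expect F G : F =1 G -> expect F = expect G.
Proof. by move=> FG; apply: eq_bigr => g _; rewrite FG. Qed.

Lemma expectD F G : expect (fun g => F g + G g) = expect F + expect G.
Proof. by rewrite /expect -big_split; apply: eq_bigr => g _; rewrite mulrDr. Qed.

Lemma expectB F G : expect (fun g => F g - G g) = expect F - expect G.
Proof. by rewrite /expect -sumrB; apply: eq_bigr => g _; rewrite mulrBr. Qed.

Lemma expectZ c F : expect (fun g => c * F g) = c * expect F.
Proof. by rewrite /expect mulr_sumr; apply: eq_bigr => g _; rewrite mulrCA. Qed.

Lemma expect_sum (I : finType) (F : I -> {ffun 'I_N -> 'I_n} -> R) :
  expect (fun g => \sum_i F i g) = \sum_i expect (F i).
Proof. by rewrite /expect exchange_big; apply: eq_bigr => g _; rewrite mulr_sumr. Qed.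

Lemma expect1 : expect (fun _ : {ffun 'I_N -> 'I_n} => 1) = 1.
Proof.
rewrite /expect; under eq_bigr do rewrite mulr1.
rewrite -(bigA_distr_bigA (fun=> w)) /=.
by rewrite big1 // => l _; rewrite w_sum1.
Qed.

Lemma expectC c : expect (fun _ : {ffun 'I_N -> 'I_n} => c) = c.
Proof. by rewrite -[c in RHS]mulr1 -expect1 -expectZ; apply: eq_expect => g; rewrite mulr1. Qed.

Lemma prodw_ge0 g : 0 <= \prod_(l < N) w (g l).
Proof. exact: prodr_ge0. Qed.

Lemma ler_expect F G : (forall g, F g <= G g) -> expect F <= expect G.
Proof. by move=> FG; apply: ler_sum => g _; rewrite ler_wpM2l ?prodw_ge0. Qed.

Lemma expect_ge0 F : (forall g, 0 <= F g) -> 0 <= expect F.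
Proof. by move=> F0; apply: sumr_ge0 => g _; rewrite mulr_ge0 ?prodw_ge0. Qed.

Lemma ler_norm_expect F G : (forall g, `|F g| <= G g) -> `|expect F| <= expect G.
Proof.
move=> FG; apply: le_trans (ler_norm_sum _ _ _) _; apply: ler_sum => g _.
by rewrite normrM ger0_norm ?prodw_ge0 // ler_wpM2l ?prodw_ge0.
Qed.

Lemma expect_vanish m i F G : (0 < m)%N -> (0 < i)%N ->
  expect (fun g => F g ^+ (2 * m)) <= 0 -> expect (fun g => F g ^+ i * G g) = 0.
Proof.
move=> m0 i0 EF; have Fm0 g : 0 <= \prod_(l < N) w (g l) * F g ^+ (2 * m).
  by rewrite mulr_ge0 ?prodw_ge0 ?expr_even_ge0.
have sum0 : expect (fun g => F g ^+ (2 * m)) = 0 by apply/le_anti; rewrite EF sumr_ge0.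
have term0 g := psumr_eq0P (fun g _ => Fm0 g) sum0 (i := g) isT.
rewrite /expect big1 // => g _; move/eqP: (term0 g).
rewrite mulf_eq0 expf_eq0 => /orP[/eqP->|/andP[_ /eqP->]]; first by rewrite mul0r.
by rewrite expr0n gtn_eqF ?mul0r ?mulr0.
Qed.

Lemma expect_mixed_le m X Y (al be : R) : (0 < m)%N -> 0 <= al -> 0 <= be ->
  expect (fun g => X g ^+ (2 * m)) <= al ^+ m ->
  expect (fun g => Y g ^+ (2 * m)) <= be ^+ m ->
  expect (fun g => X g ^+ 2 * Y g ^+ (2 * (m - 1))) <= 2 * al * be ^+ (m - 1).
Proof.
move=> m0 al0 be0; have rhs0 : 0 <= 2 * al * be ^+ (m - 1) by rewrite !mulr_ge0 ?exprn_ge0.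
have [-> EX _|m1 EX EY] := eqVneq m 1%N.
  under eq_expect do rewrite mulr1.
  rewrite subnn expr0 mulr1; rewrite muln1 expr1 in EX.
  by apply: le_trans EX _; rewrite ler_peMl // ler1n.
have [al_eq0|al_neq0] := eqVneq al 0.
  rewrite (expect_vanish (m := m)) //; apply: le_trans EX _.
  by rewrite al_eq0 expr0n gtn_eqF.
have [be_eq0|be_neq0] := eqVneq be 0.
  under eq_expect do rewrite mulrC.
  rewrite (expect_vanish (m := m)) //; first by lia.
  by apply: le_trans EY _; rewrite be_eq0 expr0n gtn_eqF.
have al_gt0 : 0 < al by rewrite lt_def al_neq0.
have be_gt0 : 0 < be by rewrite lt_def be_neq0.
(* weighted AM-GM in place of Hoelder's inequality *)
rewrite -(ler_pM2l (mulr_gt0 be_gt0 (exprn_gt0 (m - 1) al_gt0))) -expectZ.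
apply: le_trans (_ : expect (fun g => (X g ^+ 2 * be) ^+ m + (Y g ^+ 2 * al) ^+ m) <= _).
  apply: ler_expect => g; rewrite -[in X in _ <= X](subnKC m0).
  rewrite (_ : _ * _ = (X g ^+ 2 * be) ^+ 1 * (Y g ^+ 2 * al) ^+ (m - 1)).
    by apply: mulXX_le_addXX; rewrite mulr_ge0 ?sqr_ge0.
  by rewrite exprM !exprMn; ring.
have Xm (z : R) : z ^+ m = z * z ^+ (m - 1) by rewrite -exprS subn1 prednK.
rewrite expectD; under eq_expect do rewrite exprMn -exprM mulrC.
under [X in _ + X <= _]eq_expect do rewrite exprMn -exprM mulrC.
rewrite !expectZ (_ : be * _ * _ = be ^+ m * al ^+ m + al ^+ m * be ^+ m).
  by rewrite lerD // ler_wpM2l ?exprn_ge0.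
by rewrite !Xm; ring.
Qed.

Lemma expect_indep v (G : 'I_n -> R) F : (forall g j, F (fupd g v j) = F g) ->
  expect (fun g => G (g v) * F g) = (\sum_j w j * G j) * expect F.
Proof.
(* (g, j) |-> (g with coordinate v set to j, g v) is an involution that moves the
   weight of coordinate v onto the auxiliary index j. *)
move=> Finv; pose rho g := \prod_(l < N | l != v) w (g l).
have prodE g : \prod_(l < N) w (g l) = w (g v) * rho g by rewrite (bigD1 v).
have rho_upd g j : rho (fupd g v j) = rho g.
  by apply: eq_bigr => l lv; rewrite fupd_neq.
pose phi (p : {ffun 'I_N -> 'I_n} * 'I_n) := (fupd p.1 v p.2, p.1 v).
have phiK : involutive phi by case=> g j; rewrite /phi /= fupdK fupd_eq.
rewrite /expect mulr_sumr.
transitivity (\sum_(g : {ffun 'I_N -> 'I_n}) \sum_j \prod_(l < N) w (g l) * (G (g v) * F g) * w j).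
  by apply: eq_bigr => g _; rewrite -big_distrr /= w_sum1 mulr1.
rewrite pair_bigA (reindex_inj (inv_inj phiK)) /=.
rewrite -(pair_bigA _ (fun g j =>
  \prod_(l < N) w (fupd g v j l) * (G (fupd g v j v) * F (fupd g v j)) * w (g v))).
apply: eq_bigr => g _; rewrite mulr_suml; apply: eq_bigr => j _.
by rewrite !prodE rho_upd fupd_eq Finv; ring.
Qed.

End FixedDimension.

Lemma expect_restrS N (F : {ffun 'I_N -> 'I_n} -> R) :
  expect (fun g => F (restrf (leqnSn N) g)) = expect F.
Proof.
pose ext (p : 'I_n * {ffun 'I_N -> 'I_n}) : {ffun 'I_N.+1 -> 'I_n} :=
  [ffun l => if unlift ord_max l is Some i then p.2 i else p.1].
pose split (g : {ffun 'I_N.+1 -> 'I_n}) := (g ord_max, restrf (leqnSn N) g).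
have extK : cancel ext split.
  case=> j f; rewrite /split ffunE unlift_none; congr (_, _).
  by apply/ffunP => i; rewrite !ffunE widen_ord_lift liftK.
have splitK : cancel split ext.
  move=> g; apply/ffunP => l; rewrite ffunE /=.
  by case: unliftP => [i ->|->]; rewrite ?ffunE ?widen_ord_lift.
have ext_max p : ext p ord_max = p.1 := congr1 fst (extK p).
have ext_restr p : restrf (leqnSn N) (ext p) = p.2 := congr1 snd (extK p).
have ext_widen p i : ext p (widen_ord (leqnSn N) i) = p.2 i.
  by rewrite -ext_restr [RHS]ffunE.
rewrite /expect (reindex ext) /=; last by exists split => p _.
rewrite -(pair_bigA _ (fun j f =>
  \prod_(l < N.+1) w (ext (j, f) l) * F (restrf (leqnSn N) (ext (j, f))))) /=.
rewrite exchange_big /=; apply: eq_bigr => f _.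
under eq_bigr => j _ do rewrite big_ord_recr /= ext_max ext_restr /= mulrAC.
under eq_bigr => j _ do under eq_bigr => i _ do rewrite ext_widen /=.
by rewrite -big_distrr /= w_sum1 mulr1.
Qed.

Lemma expect_restr M N (h : (M <= N)%N) (F : {ffun 'I_M -> 'I_n} -> R) :
  expect (fun g => F (restrf h g)) = expect F.
Proof.
elim: N h => [|N IH] h.
  have eM : M = 0%N by apply/eqP; rewrite -leqn0.
  by subst M; apply: eq_expect => g; rewrite restrf_id.
have [hMN|hNM] := leqP M N.
  by rewrite -(IH hMN) -[RHS]expect_restrS; apply: eq_expect => g; rewrite restrf_comp.
have eM : M = N.+1 by apply/anti_leq/andP.
by subst M; apply: eq_expect => g; rewrite restrf_id.
Qed.

End ProductExpectation.

Section Extension.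
Variables (R : realType) (M N : nat) (h : (M <= N)%N) (q : mlpoly R M).

Local Notation qN := (@mlextend R M N q).

Definition widen_set (S : {set 'I_M}) : {set 'I_N} := widen_ord h @: S.

Lemma widen_set_inj : injective widen_set.
Proof. exact/imset_inj/widen_ord_inj. Qed.

Lemma mlextend_widen S : qN (widen_set S) = q S.
Proof.
rewrite /mlextend; case: ifPn => [_|/forallPn[i]]; last first.
  by rewrite negb_imply => /andP[/imsetP[j _ ->]]; rewrite /= ltn_ord.
congr q; apply/setP => j; rewrite inE; apply/existsP/idP => [[i]|jS].
  by case/andP=> /imsetP[k kS ->] /eqP /= /val_inj <-.
by exists (widen_ord h j); rewrite /widen_set imset_f ?eqxx.
Qed.

Lemma mlextend_out S : S \notin [set widen_set S' | S' in setT] -> qN S = 0.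
Proof.
rewrite /mlextend; case: ifPn => // /forallP lt_M; apply: contraNeq => _.
apply/imsetP; exists [set j : 'I_M | widen_ord h j \in S] => //.
apply/setP => i; apply/idP/imsetP => [iS|[j]]; last by rewrite inE => jS ->.
have /implyP/(_ iS) iM := lt_M i.
have wi : widen_ord h (Ordinal iM) = i by apply: val_inj.
by exists (Ordinal iM); rewrite ?inE wi.
Qed.

Lemma mlextend_sum (f : {set 'I_N} -> R) :
  \sum_S qN S * f S = \sum_S q S * f (widen_set S).
Proof.
rewrite (bigID (mem [set widen_set S | S in setT])) /= [X in _ + X]big1 ?addr0.
  rewrite big_imset /=; last by move=> S1 S2 _ _; apply: widen_set_inj.
  by apply: eq_big => [S|S _]; rewrite ?in_setT ?mlextend_widen.
by move=> S /mlextend_out->; rewrite mul0r.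
Qed.

Lemma mleval_mlextend x : mleval qN x = mleval q (fun i => x (widen_ord h i)).
Proof.
rewrite /mleval mlextend_sum; apply: eq_bigr => S _.
by rewrite big_imset //; move=> i j _ _; apply: widen_ord_inj.
Qed.

Lemma sumsqr_mlextend : \sum_S qN S ^+ 2 = \sum_S q S ^+ 2.
Proof.
under eq_bigr do rewrite expr2; rewrite mlextend_sum.
by apply: eq_bigr => S _; rewrite mlextend_widen expr2.
Qed.

Lemma mldeg_le_mlextend d : mldeg_le q d -> mldeg_le qN d.
Proof.
move=> qd S; case: (boolP (S \in [set widen_set S | S in setT])) => [|/mlextend_out-> //].
case/imsetP=> S' _ -> dS; rewrite mlextend_widen qd //.
by rewrite /widen_set card_imset // in dS; apply: widen_ord_inj.
Qed.

End Extension.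

Section VariableSplitting.
Variables (R : realType) (N : nat).
Implicit Types (p : mlpoly R N) (S V : {set 'I_N}) (v : 'I_N) (x y : 'I_N -> R) (L : R).

Definition mlderiv p v : mlpoly R N := fun S => if v \in S then 0 else p (v |: S).
Definition mldrop p v : mlpoly R N := fun S => if v \in S then 0 else p S.

Lemma sum_split_at v (f : {set 'I_N} -> R) :
  \sum_(S : {set 'I_N}) f S = \sum_(S : {set 'I_N}) (if v \in S then 0 else f (v |: S))
                            + \sum_(S : {set 'I_N}) (if v \in S then 0 else f S).
Proof.
rewrite (bigID (fun S => v \in S)) /= [X in _ + X]big_mkcond; congr (_ + _); last first.
  by apply: eq_bigr => S _; case: (v \in S).
rewrite (reindex_onto (fun S => v |: S) (fun S => S :\ v)) /=; last by move=> S vS; rewrite setD1K.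
rewrite big_mkcond; apply: eq_bigr => S _.
have -> : (v \in v |: S) && ((v |: S) :\ v == S) = (v \notin S).
  rewrite setU11; apply/eqP/idP => [<-|vS]; last by rewrite setU1K.
  by rewrite !inE eqxx.
by case: (v \in S).
Qed.

Lemma mleval_split p v x : mleval p x = x v * mleval (mlderiv p v) x + mleval (mldrop p v) x.
Proof.
rewrite /mleval (sum_split_at v) mulr_sumr; congr (_ + _); apply: eq_bigr => S _;
  rewrite /mlderiv /mldrop; case: ifPn => vS; rewrite ?mul0r ?mulr0 //.
by rewrite big_setU1 //= mulrCA.
Qed.

Lemma mleval_free p v x y : (forall S, v \in S -> p S = 0) ->
  (forall l, l != v -> x l = y l) -> mleval p x = mleval p y.
Proof.
move=> p_v xy; apply: eq_bigr => S _; have [/p_v->|vS] := boolP (v \in S); first by rewrite !mul0r.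
by congr (_ * _); apply: eq_bigr => i iS; apply: xy; apply: contraNneq vS => <-.
Qed.

Lemma eq_mleval p x y : x =1 y -> mleval p x = mleval p y.
Proof. by move=> xy; apply: eq_bigr => S _; under eq_bigr do rewrite xy. Qed.

Lemma mlderiv_free p v S : v \in S -> mlderiv p v S = 0.
Proof. by rewrite /mlderiv => ->. Qed.

Lemma mldrop_free p v S : v \in S -> mldrop p v S = 0.
Proof. by rewrite /mldrop => ->. Qed.

Definition wnorm2 L p := \sum_(S : {set 'I_N}) L ^+ #|S| * p S ^+ 2.

Lemma wnorm2_ge0 L p : 0 <= L -> 0 <= wnorm2 L p.
Proof. by move=> L0; apply: sumr_ge0 => S _; rewrite mulr_ge0 ?sqr_ge0 ?exprn_ge0. Qed.

Lemma wnorm2_split L p v : wnorm2 L p = L * wnorm2 L (mlderiv p v) + wnorm2 L (mldrop p v).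
Proof.
rewrite /wnorm2 (sum_split_at v) mulr_sumr; congr (_ + _); apply: eq_bigr => S _;
  rewrite /mlderiv /mldrop; case: ifPn => vS; rewrite ?expr0n ?mulr0 //.
by rewrite cardsU1 vS add1n exprS mulrA.
Qed.

Lemma wnorm2_le_deg L p d : 1 <= L -> mldeg_le p d ->
  wnorm2 L p <= L ^+ d * \sum_(S : {set 'I_N}) p S ^+ 2.
Proof.
move=> L1 pd; rewrite /wnorm2 mulr_sumr; apply: ler_sum => S _.
have [Sd|/pd->] := leqP #|S| d; last by rewrite expr0n /= !mulr0.
by rewrite ler_wpM2r ?sqr_ge0 // ler_weXn2l.
Qed.

Definition mlsupp p V := forall S, p S != 0 -> S \subset V.

Lemma mlsupp_setT p : mlsupp p setT.
Proof. by move=> S _; apply: subsetT. Qed.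

Lemma mlsupp_deriv p V v : mlsupp p V -> mlsupp (mlderiv p v) (V :\ v).
Proof.
move=> pV S; rewrite /mlderiv; case: ifPn => [_|vS /pV sub]; first by rewrite eqxx.
by rewrite subsetD1 vS andbT (subset_trans _ sub) // subsetUr.
Qed.

Lemma mlsupp_drop p V v : mlsupp p V -> mlsupp (mldrop p v) (V :\ v).
Proof.
move=> pV S; rewrite /mldrop; case: ifPn => [_|vS /pV sub]; first by rewrite eqxx.
by rewrite subsetD1 vS sub.
Qed.

Lemma mlsupp_set0 p S : mlsupp p set0 -> S != set0 -> p S = 0.
Proof. by move=> p0 S0; apply: contraNeq S0 => /p0; rewrite subset0. Qed.

Lemma mleval_supp0 p x : mlsupp p set0 -> mleval p x = p set0.
Proof.
move=> p0; rewrite /mleval (bigD1 set0) //= big_set0 mulr1 big1 ?addr0 // => S S0.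
by rewrite mlsupp_set0 ?mul0r.
Qed.

Lemma wnorm2_supp0 L p : mlsupp p set0 -> wnorm2 L p = p set0 ^+ 2.
Proof.
move=> p0; rewrite /wnorm2 (bigD1 set0) //= cards0 mul1r big1 ?addr0 // => S S0.
by rewrite mlsupp_set0 // expr0n /= mulr0.
Qed.

Lemma sqr_coeff_norm p : coeff_norm p ^+ 2 = \sum_(S : {set 'I_N}) p S ^+ 2.
Proof. by rewrite sqr_sqrtr // sumr_ge0 // => S _; apply: sqr_ge0. Qed.

Lemma mleval_sub p q x : mleval (mlsub p q) x = mleval p x - mleval q x.
Proof. by rewrite /mleval -sumrB; apply: eq_bigr => S _; rewrite /mlsub mulrBl. Qed.

Lemma mldeg_le_sub p q d : mldeg_le p d -> mldeg_le q d -> mldeg_le (mlsub p q) d.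
Proof. by move=> pd qd S dS; rewrite /mlsub pd ?qd ?subr0. Qed.

Lemma sumsqr_le_mlsub p q :
  \sum_S q S ^+ 2 <= 2 * \sum_S p S ^+ 2 + 2 * \sum_S mlsub p q S ^+ 2.
Proof.
rewrite !mulr_sumr -big_split /=; apply: ler_sum => S _.
by rewrite -subr_ge0 (_ : _ - _ = (2 * p S - q S) ^+ 2) ?sqr_ge0 // /mlsub; ring.
Qed.

End VariableSplitting.

Section PolynomialMoments.
Variables (R : realType) (n : nat) (a w : 'I_n -> R).
Hypothesis w_ge0 : forall i, 0 <= w i.
Hypothesis w_sum1 : \sum_(i < n) w i = 1.
Hypothesis a_mean0 : \sum_(i < n) w i * a i = 0.

Definition rv N (p : mlpoly R N) (g : {ffun 'I_N -> 'I_n}) : R := mleval p (fun l => a (g l)).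

Definition moment t := \sum_(i < n) w i * a i ^+ t.

Definition asum : R := \sum_(i < n) `|a i|.

Lemma asum_ge0 : 0 <= asum.
Proof. exact: sumr_ge0. Qed.

Lemma moment_le t : `|moment t| <= asum ^+ t.
Proof.
apply: le_trans (ler_norm_sum _ _ _) _; rewrite -[X in _ <= X]mul1r -w_sum1 mulr_suml.
apply: ler_sum => i _; rewrite normrM normrX ger0_norm // ler_wpM2l // lerXn2r ?nnegrE ?asum_ge0 //.
by rewrite /asum (bigD1 i) //= lerDl sumr_ge0.
Qed.

Lemma moment0 : moment 0 = 1.
Proof. by rewrite -w_sum1; apply: eq_bigr => i _; rewrite mulr1. Qed.

Lemma moment1 : moment 1 = 0.
Proof. by rewrite -a_mean0; apply: eq_bigr => i _; rewrite expr1. Qed.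

(* (1 + asum)^(2m) = sum_i C(2m,i) asum^i dominates the binomial expansion, and
   the factor 3 absorbs E[q^(2m)] + E[q^2 r^(2m-2)] <= 3 alpha (alpha + beta)^(m-1). *)
Definition hc_const m : R := 3 * (1 + asum) ^+ (2 * m).

Lemma hc_const_ge1 m : 1 <= hc_const m.
Proof.
have : 1 <= (1 + asum) ^+ (2 * m) by rewrite exprn_ege1 // lerDl asum_ge0.
rewrite /hc_const; lra.
Qed.

Lemma rv_free N (p : mlpoly R N) (v : 'I_N) (g : {ffun 'I_N -> 'I_n}) (j : 'I_n) :
  (forall S : {set 'I_N}, v \in S -> p S = 0) ->
  rv p (fupd g v j) = rv p g.
Proof. by move=> p_v; apply: (mleval_free p_v) => l lv; rewrite ffunE (negbTE lv). Qed.

Lemma expect_rv_expansion m N (p : mlpoly R N) v :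
  expect w (fun g => rv p g ^+ m) = \sum_(i < m.+1) moment i *
    expect w (fun g => 'C(m, i)%:R * (rv (mldrop p v) g ^+ (m - i) * rv (mlderiv p v) g ^+ i)).
Proof.
pose T i g := 'C(m, i)%:R * (rv (mldrop p v) g ^+ (m - i) * rv (mlderiv p v) g ^+ i).
transitivity (expect w (fun g => \sum_(i < m.+1) a (g v) ^+ i * T i g)).
  apply: eq_expect => g; rewrite /rv (mleval_split p v) addrC exprDn.
  by apply: eq_bigr => i _; rewrite /T exprMn -mulr_natl; ring.
rewrite expect_sum; apply: eq_bigr => i _; apply: expect_indep => // g j.
by rewrite /T !rv_free // => S; [apply: mlderiv_free | apply: mldrop_free].
Qed.

Lemma moment_binomial_le m N (p : mlpoly R N) v (be : R) :
  let q := mlderiv p v in let r := mldrop p v in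
  expect w (fun g => rv r g ^+ (2 * m)) <= be ^+ m ->
  expect w (fun g => rv p g ^+ (2 * m)) <= be ^+ m + (1 + asum) ^+ (2 * m) *
    expect w (fun g => rv q g ^+ (2 * m) + rv q g ^+ 2 * rv r g ^+ (2 * (m - 1))).
Proof.
move=> q r Er; set Z := (X in _ * X).
have Z0 : 0 <= Z.
  by apply: expect_ge0 => // g; rewrite addr_ge0 ?expr_even_ge0 // mulr_ge0 ?sqr_ge0 ?expr_even_ge0.
have term_le (i : 'I_(2 * m).+1) : moment i *
    expect w (fun g => 'C(2 * m, i)%:R * (rv r g ^+ (2 * m - i) * rv q g ^+ i))
    <= (i == 0 :> nat)%:R * be ^+ m + 'C(2 * m, i)%:R * asum ^+ i * Z.
  case: i => [[|[|i]] lti] /=.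
  - rewrite moment0 mul1r; under eq_expect do rewrite bin0 mul1r subn0 expr0 mulr1.
    by apply: le_trans Er _; rewrite bin0 !mul1r lerDl.
  - by rewrite moment1 !mul0r add0r mulr_ge0 // mulr_ge0 ?ler0n ?exprn_ge0 ?asum_ge0.
  rewrite mul0r add0r; apply: le_trans (ler_norm _) _.
  rewrite normrM [X in _ <= X]mulrAC [X in _ <= X]mulrC ler_pM ?moment_le //.
  rewrite /Z -expectZ; apply: ler_norm_expect => // g.
  rewrite normrM ger0_norm // ler_wpM2l // normrM !normrX mulrC.
  exact: normrX_mul_le.
rewrite (expect_rv_expansion _ _ v); apply: le_trans (ler_sum _ (fun i _ => term_le i)) _.
rewrite big_split /= big_ord_recl /= mul1r big1 => [|i _]; last by rewrite mul0r.
rewrite addr0 -mulr_suml exprDn lerD2l.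
by under [X in _ <= X * _]eq_bigr do rewrite expr1n mul1r -mulr_natl.
Qed.

Lemma moment_split_le m N (p : mlpoly R N) v : (0 < m)%N ->
  let L := hc_const m in let q := mlderiv p v in let r := mldrop p v in
  expect w (fun g => rv q g ^+ (2 * m)) <= wnorm2 L q ^+ m ->
  expect w (fun g => rv r g ^+ (2 * m)) <= wnorm2 L r ^+ m ->
  expect w (fun g => rv p g ^+ (2 * m)) <= wnorm2 L p ^+ m.
Proof.
move=> m0 L q r Eq Er; have L1 : 1 <= L := hc_const_ge1 m; have L0 := le_trans ler01 L1.
set al := wnorm2 L q; set be := wnorm2 L r.
have al0 : 0 <= al := wnorm2_ge0 q L0; have be0 : 0 <= be := wnorm2_ge0 r L0.
apply: le_trans (moment_binomial_le Er) _.
rewrite (wnorm2_split L p v) -/q -/r -/al -/be expectD.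
apply: le_trans (exprD_ge_split L1 al0 be0 m0); rewrite lerD2l.
rewrite (_ : L * al * _ = (1 + asum) ^+ (2 * m) * (3 * al * (al + be) ^+ (m - 1))); last first.
  by rewrite /L /hc_const; ring.
rewrite ler_wpM2l ?exprn_ge0 ?addr_ge0 ?asum_ge0 //.
apply: le_trans (lerD Eq (expect_mixed_le w_ge0 m0 al0 be0 Eq Er)) _.
have al_le : al ^+ (m - 1) <= (al + be) ^+ (m - 1) by rewrite lerXn2r ?nnegrE ?addr_ge0 ?lerDl.
have be_le : be ^+ (m - 1) <= (al + be) ^+ (m - 1) by rewrite lerXn2r ?nnegrE ?addr_ge0 ?lerDr.
have -> : al ^+ m = al * al ^+ (m - 1) by rewrite -exprS subn1 prednK.
by have := ler_wpM2l al0 al_le; have := ler_wpM2l al0 be_le; lra.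
Qed.

Lemma moment_le_wnorm2 m N (p : mlpoly R N) :
  expect w (fun g => rv p g ^+ (2 * m)) <= wnorm2 (hc_const m) p ^+ m.
Proof.
case: m => [|m]; first by under eq_expect do rewrite muln0 expr0; rewrite expectC.
have base (q : mlpoly R N) : mlsupp q set0 ->
    expect w (fun g => rv q g ^+ (2 * m.+1)) <= wnorm2 (hc_const m.+1) q ^+ m.+1.
  move=> q0; under eq_expect do rewrite /rv mleval_supp0 //.
  by rewrite expectC // wnorm2_supp0 // -exprM.
suff /(_ #|[set: 'I_N]| setT p) : forall c (V : {set 'I_N}) (q : mlpoly R N),
    (#|V| <= c)%N -> mlsupp q V ->
    expect w (fun g => rv q g ^+ (2 * m.+1)) <= wnorm2 (hc_const m.+1) q ^+ m.+1.
  by apply=> //; apply: mlsupp_setT.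
elim=> [|c IH] V q; first by rewrite leqn0 cards_eq0 => /eqP->; apply: base.
have [->|[v vV] Vc qV] := set_0Vmem V; first by move=> _; apply: base.
have VDc : (#|V :\ v| <= c)%N by move: Vc; rewrite (cardsD1 v V) vV.
by apply: (moment_split_le (v := v)) => //; apply: IH VDc _;
  [apply: mlsupp_deriv | apply: mlsupp_drop].
Qed.

Lemma moment_le_deg m d N (p : mlpoly R N) : mldeg_le p d ->
  expect w (fun g => rv p g ^+ (2 * m)) <= (hc_const m ^+ d * \sum_S p S ^+ 2) ^+ m.
Proof.
move=> pd; apply: le_trans (moment_le_wnorm2 m p) _.
have L1 := hc_const_ge1 m; have L0 := le_trans ler01 L1.
have sum0 : 0 <= \sum_(S : {set 'I_N}) p S ^+ 2 by apply: sumr_ge0 => S _; apply: sqr_ge0.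
by rewrite lerXn2r ?nnegrE ?wnorm2_le_deg ?wnorm2_ge0 // mulr_ge0 ?exprn_ge0.
Qed.

Lemma tens_moment_mlextend M N (h : (M <= N)%N) (q : mlpoly R M) j :
  tens_moment a w q j = expect w (fun g => rv (@mlextend R M N q) g ^+ j).
Proof.
transitivity (expect w (fun f : {ffun 'I_M -> 'I_n} => rv q f ^+ j)) => //.
rewrite -(expect_restr w_sum1 h); apply: eq_expect => g.
by rewrite /rv mleval_mlextend; congr (_ ^+ _); apply: eq_mleval => i; rewrite ffunE.
Qed.

(* The three summands bound E[D^2], E[P^(2j-2)] and E[Q^(2j-2)], using ||Q||^2 <= 4. *)
Definition moment_gap_const d j : R :=
  (hc_const 1 ^+ d + (2 * j ^ 2)%:R *
    ((hc_const j.-1 ^+ d) ^+ j.-1 + (4 * hc_const j.-1 ^+ d) ^+ j.-1)) / 2.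

Lemma moment_gap_le d N (P Q : mlpoly R N) eta j :
  mldeg_le P d -> mldeg_le Q d -> \sum_S P S ^+ 2 = 1 ->
  \sum_S mlsub P Q S ^+ 2 <= eta ^+ 2 -> 0 <= eta <= 1 ->
  `|expect w (fun g => rv P g ^+ j) - expect w (fun g => rv Q g ^+ j)|
    <= moment_gap_const d j * eta.
Proof.
move=> Pd Qd P1 Deta /andP[eta0 eta1]; set D := mlsub P Q; set m := j.-1.
have Dd : mldeg_le D d := mldeg_le_sub Pd Qd.
have L0 k : 0 <= hc_const k := le_trans ler01 (hc_const_ge1 k).
have Q4 : \sum_S Q S ^+ 2 <= 4.
  by have := sumsqr_le_mlsub P Q; rewrite -/D P1; have := exprn_ile1 2 eta0 eta1; lra.
have ED : expect w (fun g => rv D g ^+ 2) <= hc_const 1 ^+ d * eta ^+ 2.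
  have := moment_le_deg 1 Dd; rewrite muln1 expr1 => /le_trans; apply.
  by rewrite ler_wpM2l ?exprn_ge0.
have EP : expect w (fun g => rv P g ^+ (2 * m)) <= (hc_const m ^+ d) ^+ m.
  by have := moment_le_deg m Pd; rewrite P1 mulr1.
have EQ : expect w (fun g => rv Q g ^+ (2 * m)) <= (4 * hc_const m ^+ d) ^+ m.
  apply: le_trans (moment_le_deg m Qd) _.
  have sum0 : 0 <= \sum_(S : {set 'I_N}) Q S ^+ 2 by apply: sumr_ge0 => S _; apply: sqr_ge0.
  apply: lerXn2r; rewrite ?nnegrE ?mulr_ge0 ?exprn_ge0 //.
  by rewrite [X in _ <= X]mulrC ler_wpM2l ?exprn_ge0.
pose T g := \sum_(i < j) rv P g ^+ (j.-1 - i) * rv Q g ^+ i.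
have -> : expect w (fun g => rv P g ^+ j) - expect w (fun g => rv Q g ^+ j)
    = expect w (fun g => rv D g * T g).
  by rewrite -expectB; apply: eq_expect => g; rewrite subrXX /rv mleval_sub.
have [eta_eq0|eta_neq0] := eqVneq eta 0.
  rewrite (expect_vanish w_ge0 (m := 1) (i := 1)) ?normr0 ?eta_eq0 ?mulr0 //.
  by move: ED; rewrite muln1 eta_eq0 expr0n mulr0.
have eta2 : 0 < 2 * eta by rewrite mulr_gt0 // lt_def eta_neq0.
rewrite -(ler_pM2l eta2) -{1}(ger0_norm (ltW eta2)) -normrM -expectZ.
pose G g := rv D g ^+ 2 + eta ^+ 2 * ((2 * j ^ 2)%:R * (rv P g ^+ (2 * m) + rv Q g ^+ (2 * m))).
apply: le_trans (ler_norm_expect w_ge0 (G := G) _) _.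
  move=> g; rewrite normrM (ger0_norm (ltW eta2)); apply: le_trans (amgm_mul_le _ _ _) _.
  by rewrite lerD2l ler_wpM2l ?sqr_ge0 ?sqr_sumXX_le.
rewrite /G expectD expectZ expectZ expectD.
apply: le_trans (lerD ED (ler_wpM2l (sqr_ge0 _) (ler_wpM2l (ler0n _ _) (lerD EP EQ)))) _.
by rewrite /moment_gap_const -subr_ge0 (_ : _ - _ = 0) //; field.
Qed.

End PolynomialMoments.

Theorem lemma9p7 (R : realType) (n : nat) (a w : 'I_n -> R)
  (hw : is_fdist w) (hmean : fexp a w = 0) (hvar : fvar a w = 1)
  (k d : nat) (hk : (0 < k)%N) :
  exists xi : R,
    forall (s : nat) (q1 : mlpoly R (d * s)) (N : nat) (q2 : mlpoly R N) (eta : R),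
      (d * s <= N)%N ->
      mldeg_le q1 d -> coeff_norm q1 = 1 ->
      mldeg_le q2 d ->
      coeff_norm (mlsub (@mlextend R (d * s) N q1) q2) <= eta -> eta <= 1 ->
      Mom a w k q1 q2 <= xi * eta.
Proof.
case: hw => w_ge0 w_sum1.
exists (Num.sqrt (\sum_(1 <= j < k.+1) moment_gap_const a d j ^+ 2)).
move=> s q1 N q2 eta hN q1d q1n q2d Deta eta1.
have eta0 : 0 <= eta := le_trans (sqrtr_ge0 _) Deta.
rewrite /Mom; apply: sqrt_sum_sqr_le => // j.
rewrite (tens_moment_mlextend a w_sum1 hN); apply: (moment_gap_le w_ge0 w_sum1 hmean) => //.
- exact: mldeg_le_mlextend.
- by rewrite (sumsqr_mlextend hN) -sqr_coeff_norm q1n expr1n.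
- by rewrite -sqr_coeff_norm lerXn2r ?nnegrE ?sqrtr_ge0.
- by rewrite eta0 eta1.
Qed.
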